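(* Define integer matrices $(a(i,j))_{i,j\ge1}$ and $(b(i,j))_{i,j\ge1}$ as follows. The first three rows are (entries listed for $j=1,2,\dots$; all further entries in these rows are $0$): \begin{itemize} \item $a(1,\cdot)=(10,-36,27)$; $a(2,\cdot)=(-8,306,-2160,5508,-5832,2187)$; $a(3,\cdot)=(1,-360,10566,-99144,423549,-944784,1141614,-708588,177147)$; \item $b(1,\cdot)=(-9,252,-891,729)$; $b(2,\cdot)=(1,-378,8613,-54675,138510,-150903,59049)$; $b(3,\cdot)=(0,147,-14553,312255,-2617839,10764414,-23914845,29288304,-18600435,4782969)$. \end{itemize} For $i\ge4$ and $j\ge1$, both $m=a$ and $m=b$ satisfy $$m(i,j)=30m(i-1,j-1)-108m(i-1,j-2)+81m(i-1,j-3)-12m(i-2,j-1)+9m(i-2,j-2)+m(i-3,j-1),$$ with $m(i,j)=0$ whenever $j\le0$. Define integer sequences $d_\alpha=(d_\alpha(j))_{j\ge1}$ for $\alpha\ge1$ by $d_1=(9,0,0,\dots)$ and, for $\alpha\ge2$, $d_\alpha(j)=\sum_{k\ge1}a(k,j)d_{\alpha-1}(k)$ if $\alpha$ is even and $d_\alpha(j)=\sum_{k\ge1}b(k,j)d_{\alpha-1}(k)$ if $\alpha$ is odd. Then for all $\alpha\ge1$ and $j\ge1$, $$\pi(d_{2\alpha-1}(j))\ge 2\alpha+\left\lfloor\frac{2j-2}{3}\right\rfloor.$$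
   Context: For an integer $n$, $\pi(n)$ denotes the $3$-adic order of $n$, with the convention $\pi(0)=\infty$. $\lfloor x\rfloor$ is the largest integer not exceeding $x$. All sums defining $d_\alpha(j)$ are finite. *)

From mathcomp Require Import all_boot all_order all_algebra.
From Stdlib Require BinNat.
Set Implicit Arguments. Unset Strict Implicit. Unset Printing Implicit Defensive.
Import Order.TTheory GRing.Theory Num.Theory.
Local Open Scope ring_scope.

(* Large integer literals: entered in binary (N) to avoid unary nat parsing. *)
Definition zp (n : BinNums.N) : int := Posz (nat_of_bin n).
Definition zn (n : BinNums.N) : int := - Posz (nat_of_bin n).

Definition row_of (s : seq int) (j : nat) : int :=
  if j is j'.+1 then nth 0 s j' else 0.

Fixpoint recmat (r1 r2 r3 : seq int) (i j : nat) {struct i} : int :=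
  match i with
  | 0 => 0
  | 1 => row_of r1 j
  | 2 => row_of r2 j
  | 3 => row_of r3 j
  | ((((i3.+1 as i2).+1) as i1).+1) =>
      if j is 0 then 0 else
      30 * recmat r1 r2 r3 i1 (j - 1)%N - 108 * recmat r1 r2 r3 i1 (j - 2)%N
      + 81 * recmat r1 r2 r3 i1 (j - 3)%N - 12 * recmat r1 r2 r3 i2 (j - 1)%N
      + 9 * recmat r1 r2 r3 i2 (j - 2)%N + recmat r1 r2 r3 i3 (j - 1)%N
  end.

Module Rows.
Import BinNat.
Definition a1 : seq int := [:: zp 10; zn 36; zp 27].
Definition a2 : seq int := [:: zn 8; zp 306; zn 2160; zp 5508; zn 5832; zp 2187].
Definition a3 : seq int := [:: zp 1; zn 360; zp 10566; zn 99144; zp 423549; zn 944784; zp 1141614; zn 708588; zp 177147].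
Definition b1 : seq int := [:: zn 9; zp 252; zn 891; zp 729].
Definition b2 : seq int := [:: zp 1; zn 378; zp 8613; zn 54675; zp 138510; zn 150903; zp 59049].
Definition b3 : seq int := [:: zp 0; zp 147; zn 14553; zp 312255; zn 2617839; zp 10764414; zn 23914845; zp 29288304; zn 18600435; zp 4782969].
End Rows.

Definition amat : nat -> nat -> int := recmat Rows.a1 Rows.a2 Rows.a3.

Definition bmat : nat -> nat -> int := recmat Rows.b1 Rows.b2 Rows.b3.

(* d_alpha(j); the sum over k >= 1 is written as the sum over 1 <= k <= 3j,
   which is exact because a(k,j) = b(k,j) = 0 for k > 3j.
   d 0 is an unused junk value. *)
Fixpoint dseq (alpha : nat) : nat -> int :=
  match alpha with
  | 0 => fun _ => 0
  | 1 => row_of [:: 9]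
  | (alpha'.+1 as am1).+1 =>
      fun j => \sum_(1 <= k < 3 * j + 1)
                 (if ~~ odd alpha'.+2 then amat k j else bmat k j) * dseq am1 k
  end.

(* 3-adic order with pi(0) = infinity (None). *)
Definition pi3 (x : int) : option nat :=
  if x == 0 then None else Some (logn 3 `|x|%N).

Definition pi3_ge (x : int) (n : nat) : bool :=
  if pi3 x is Some v then (n <= v)%N else true.

(* Measure valuations in thirds: write v(x) = 3 pi(x).  The coefficients of the
   recurrence have v(30) = 3, v(108) = 9, v(81) = 12, v(12) = 3, v(9) = 6, so
   linear lower bounds on v(a(i,j)) and v(b(i,j)) that hold on the first three
   rows propagate to all rows: v(a(i,j)) >= 4j - 2i (minus 2 on row 1),
   v(b(i,j)) >= 2j - 4i + 6 and v(b(i,j)) >= 3j - 3i + 3.  With weights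
   w_odd(k) ~ 2k - 4 and w_even(j) ~ 4j - 4, corrected at a few small indices,
   this yields v(a(k,j)) >= w_even(j) - w_odd(k) and
   v(b(k,j)) >= w_odd(j) + 6 - w_even(k), so each pair of steps
   d_(2n-1) -> d_(2n+1) gains 6, and v(d_(2a-1)(j)) >= 6a + 2j - 4. *)

From Stdlib Require Import BinNat.
From mathcomp Require Import all_boot all_order all_algebra zify.
Set Implicit Arguments. Unset Strict Implicit. Unset Printing Implicit Defensive.
Import Order.TTheory GRing.Theory Num.Theory.
Local Open Scope ring_scope.

Definition val3_ge (x L : int) : Prop :=
  exists n : nat, L <= 3 * (n : int) /\ ((3 : int) ^+ n %| x)%Z.

Lemma val3_geW x L L' : L' <= L -> val3_ge x L -> val3_ge x L'.
Proof. by move=> le [n [hn dvd]]; exists n; split; first exact: le_trans hn. Qed.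

Lemma val3_ge_le0 x L : L <= 0 -> val3_ge x L.
Proof. by move=> le; exists 0%N; rewrite expr0 dvd1z. Qed.

Lemma val3_ge0 L : val3_ge 0 L.
Proof. by exists `|L|%N; split; [lia | exact: dvdz0]. Qed.

Lemma val3_geD x y L : val3_ge x L -> val3_ge y L -> val3_ge (x + y) L.
Proof.
move=> [m [hm dx]] [n [hn dy]]; exists (minn m n); split; first lia.
by apply: rpredD; [apply: dvdz_trans dx | apply: dvdz_trans dy];
  apply: dvdz_exp2l; [exact: geq_minl | exact: geq_minr].
Qed.

Lemma val3_geN x L : val3_ge x L -> val3_ge (- x) L.
Proof. by move=> [n [hn dx]]; exists n; rewrite rpredN. Qed.

Lemma val3_geB x y L : val3_ge x L -> val3_ge y L -> val3_ge (x - y) L.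
Proof. by move=> hx /val3_geN hy; exact: (val3_geD hx hy). Qed.

Lemma val3_ge_sum (I : eqType) (r : seq I) (P : pred I) (F : I -> int) L :
  (forall i, i \in r -> P i -> val3_ge (F i) L) -> val3_ge (\sum_(i <- r | P i) F i) L.
Proof.
move=> hF; rewrite big_seq_cond; apply: (big_ind (val3_ge^~ L)).
- exact: val3_ge0.
- by move=> x y; exact: val3_geD.
- by move=> i /andP [ir Pi]; exact: hF.
Qed.

Lemma val3_geM x y L M : val3_ge x L -> val3_ge y M -> val3_ge (x * y) (L + M).
Proof.
move=> [m [hm dx]] [n [hn dy]]; exists (m + n)%N; split; first lia.
by rewrite exprD; apply: dvdz_mul.
Qed.

Definition ceil3 (L : int) : nat := if L is Posz l then ((l + 2) %/ 3)%N else 0%N.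

Lemma ceil3_spec L : L <= 3 * (ceil3 L : int).
Proof. by case: L => [l|l] /=; lia. Qed.

Lemma val3_ge_ceil3 x L : ((3 : int) ^+ ceil3 L %| x)%Z -> val3_ge x L.
Proof. by move=> dx; exists (ceil3 L); split; first exact: ceil3_spec. Qed.

Lemma pi3_ge_val3_ge x (n : nat) : val3_ge x (3 * (n : int) - 2) -> pi3_ge x n.
Proof.
move=> [m [hm dx]]; rewrite /pi3_ge /pi3; case: eqP => // /eqP x_neq0.
have dvd : (3 ^ m %| `|x|)%N by move: dx; rewrite dvdzE abszX.
rewrite -pfactor_dvdn ?absz_gt0 //; apply: dvdn_trans dvd; apply: dvdn_exp2l; lia.
Qed.

Section RecurrenceBounds.

Variables (r1 r2 r3 : seq int) (L : nat -> nat -> int).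
Local Notation M := (recmat r1 r2 r3).

Lemma recmat_col0 i : M i 0 = 0.
Proof. by case: i => [|[|[|[|i]]]]. Qed.

Lemma recmatS i j :
  M i.+4 j.+1 = 30 * M i.+3 j - 108 * M i.+3 j.-1 + 81 * M i.+3 j.-2
                - 12 * M i.+2 j + 9 * M i.+2 j.-1 + M i.+1 j.
Proof.
have -> : M i.+4 j.+1 = 30 * M i.+3 (j.+1 - 1) - 108 * M i.+3 (j.+1 - 2)
    + 81 * M i.+3 (j.+1 - 3) - 12 * M i.+2 (j.+1 - 1) + 9 * M i.+2 (j.+1 - 2)
    + M i.+1 (j.+1 - 1) by [].
by rewrite !subSS subn0 subn1 subn2.
Qed.

Hypotheses (row1 : forall j, val3_ge (row_of r1 j) (L 1 j))
           (row2 : forall j, val3_ge (row_of r2 j) (L 2 j))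
           (row3 : forall j, val3_ge (row_of r3 j) (L 3 j)).

(* The constants are 3 pi(c) for the coefficients c = 30, 108, 81, 12, 9, 1. *)
Hypotheses (L30 : forall i j, L i.+4 j.+1 <= 3 + L i.+3 j)
           (L108 : forall i j, L i.+4 j.+1 <= 9 + L i.+3 j.-1)
           (L81 : forall i j, L i.+4 j.+1 <= 12 + L i.+3 j.-2)
           (L12 : forall i j, L i.+4 j.+1 <= 3 + L i.+2 j)
           (L9 : forall i j, L i.+4 j.+1 <= 6 + L i.+2 j.-1)
           (L1 : forall i j, L i.+4 j.+1 <= L i.+1 j).

Lemma recmat_val3_ge i j : val3_ge (M i j) (L i j).
Proof.
suff rows k : [/\ forall n, val3_ge (M k n) (L k n),
                  forall n, val3_ge (M k.+1 n) (L k.+1 n) &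
                  forall n, val3_ge (M k.+2 n) (L k.+2 n)] by case: (rows i).
elim: k => [|k [IH0 IH1 IH2]]; first by split=> //= n; exact: val3_ge0.
split=> // n; case: k IH0 IH1 IH2 => [|k] IH0 IH1 IH2; first exact: row3.
case: n => [|n]; first by rewrite recmat_col0; exact: val3_ge0.
have term c e k' n' : L k.+4 n.+1 <= e + L k' n' -> val3_ge (M k' n') (L k' n') ->
    ((3 : int) ^+ ceil3 e %| c)%Z -> val3_ge (c * M k' n') (L k.+4 n.+1).
  by move=> le hM /val3_ge_ceil3 hc; apply: val3_geW le _; exact: val3_geM.
rewrite recmatS.
apply: val3_geD; last exact: val3_geW (L1 k n) (IH0 n).
apply: val3_geD; last by apply: (term _ _ _ _ (L9 k n) (IH1 n.-1)).
apply: val3_geB; last by apply: (term _ _ _ _ (L12 k n) (IH1 n)).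
apply: val3_geD; last by apply: (term _ _ _ _ (L81 k n) (IH2 n.-2)).
apply: val3_geB; first by apply: (term _ _ _ _ (L30 k n) (IH2 n)).
by apply: (term _ _ _ _ (L108 k n) (IH2 n.-1)).
Qed.

End RecurrenceBounds.

(* The row entries are too large to be unfolded into unary naturals, so their
   divisibility by powers of 3 is decided on their binary representation. *)
Fixpoint dvdN_pow3 (m : nat) (n : N) : bool :=
  if m is m'.+1 then N.eqb (N.modulo n 3) 0 && dvdN_pow3 m' (N.div n 3) else true.

Lemma nat_of_binM (a b : N) : nat_of_bin (a * b) = (nat_of_bin a * nat_of_bin b)%N.
Proof. by case: a => [|a]; case: b => [|b] //=; rewrite ?muln0 // nat_of_mul_pos. Qed.

Lemma dvdN_pow3P m n : dvdN_pow3 m n -> (3 ^ m %| nat_of_bin n)%N.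
Proof.
elim: m n => [|m IH] n /=; first by rewrite dvd1n.
case/andP => /N.eqb_spec n_mod3 /IH dvd.
have -> : n = (3 * (n / 3))%num by apply/N.Div0.div_exact.
by rewrite nat_of_binM expnS dvdn_mul.
Qed.

Definition int_of_sbin (x : bool * N) : int := if x.1 then zn x.2 else zp x.2.

Lemma val3_ge_sbin x L : dvdN_pow3 (ceil3 L) x.2 -> val3_ge (int_of_sbin x) L.
Proof.
move=> /dvdN_pow3P dvd; apply: val3_ge_ceil3.
by rewrite dvdzE abszX /int_of_sbin; case: x.1; rewrite /zn /zp ?abszN.
Qed.

Fixpoint sbin_row_val3_geb (s : seq (bool * N)) (L : nat -> int) : bool :=
  if s is x :: s' then ((L 1%N <= 0) || dvdN_pow3 (ceil3 (L 1%N)) x.2)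
                       && sbin_row_val3_geb s' (L \o S)
  else true.

Lemma sbin_row_val3_ge s L :
  sbin_row_val3_geb s L -> forall j, val3_ge (row_of (map int_of_sbin s) j) (L j).
Proof.
elim: s L => [|x s IH] L /=; first by move=> _ [|[|j]]; exact: val3_ge0.
case/andP => /orP hx /IH hs [|[|j]] /=; first exact: val3_ge0.
- by case: hx => [/val3_ge_le0 | /val3_ge_sbin].
- exact: (hs j.+1).
Qed.

Ltac sbin_of_row s :=
  lazymatch s with
  | nil => constr:(@nil (bool * N))
  | zp ?n :: ?t => let r := sbin_of_row t in constr:((false, n) :: r)
  | zn ?n :: ?t => let r := sbin_of_row t in constr:((true, n) :: r)
  end.

Ltac row_val3_ge_by_computation :=
  lazymatch goal with |- forall j, val3_ge (row_of ?s j) _ =>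
    let s' := eval red in s in
    let r := sbin_of_row s' in
    apply: (@sbin_row_val3_ge r); vm_compute; reflexivity
  end.

Definition amat_lb (i j : nat) : int :=
  4 * (j : int) - 2 * (i : int) - (if i == 1%N then 2 else 0).
Definition bmat_lb (i j : nat) : int := 2 * (j : int) - 4 * (i : int) + 6.
Definition bmat_lb' (i j : nat) : int := 3 * (j : int) - 3 * (i : int) + 3.

Lemma amat_val3_ge i j : val3_ge (amat i j) (amat_lb i j).
Proof.
apply: recmat_val3_ge; try by row_val3_ge_by_computation.
all: by move=> {}i {}j; rewrite /amat_lb; case: i => [|i] /=; lia.
Qed.

Lemma bmat_val3_ge i j : val3_ge (bmat i j) (bmat_lb i j).
Proof.
apply: recmat_val3_ge; try by row_val3_ge_by_computation.
all: by move=> {}i {}j; rewrite /bmat_lb; lia.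
Qed.

Lemma bmat_val3_ge' i j : val3_ge (bmat i j) (bmat_lb' i j).
Proof.
apply: recmat_val3_ge; try by row_val3_ge_by_computation.
all: by move=> {}i {}j; rewrite /bmat_lb'; lia.
Qed.

(* The invariant is 3 pi(d_(2n+1)(k)) >= 6(n+1) + wt_odd k and
   3 pi(d_(2n+2)(k)) >= 6(n+1) + wt_even k. *)
Definition wt_odd (k : nat) : int :=
  2 * (k : int) - 4 + (if k == 1%N then 2 else 0) + (if k == 4%N then 2 else 0).
Definition wt_even (j : nat) : int := 4 * (j : int) - 4 + (if j == 2%N then 2 else 0).

Lemma wt_odd_ge (k : nat) : 2 * (k : int) - 4 <= wt_odd k.
Proof. by rewrite /wt_odd; do 2 case: eqP => ?; lia. Qed.

Lemma amat_val3_ge_wt k j : (1 <= k)%N -> (1 <= j)%N ->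
  val3_ge (amat k j) (wt_even j - wt_odd k).
Proof.
move=> k_gt0 j_gt0; have [->|j_neq2] := eqVneq j 2%N; last first.
  apply: val3_geW (amat_val3_ge k j); rewrite /wt_odd /wt_even /amat_lb.
  by do 3 case: eqP => ?; lia.
case: k k_gt0 => [|[|[|[|k]]]] // _; last first.
  by apply: val3_ge_le0; rewrite /wt_odd /wt_even /=; case: eqP => ?; lia.
all: by apply: val3_ge_ceil3; vm_compute.
Qed.

Lemma bmat_val3_ge_wt k j : (1 <= k)%N -> (1 <= j)%N ->
  val3_ge (bmat k j) (wt_odd j + 6 - wt_even k).
Proof.
move=> k_gt0 j_gt0; have [->|j_neq1] := eqVneq j 1%N.
  case: k k_gt0 => [|[|k]] // _; first by apply: val3_ge_ceil3; vm_compute.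
  by apply: val3_ge_le0; rewrite /wt_odd /wt_even /=; case: eqP => ?; lia.
have [->|j_neq4] := eqVneq j 4%N.
  apply: val3_geW (bmat_val3_ge' k 4); rewrite /wt_odd /wt_even /bmat_lb' /=.
  by case: eqP => ?; lia.
apply: val3_geW (bmat_val3_ge k j); rewrite /wt_odd /wt_even /bmat_lb.
by do 3 case: eqP => ?; lia.
Qed.

Lemma dseqSS n j : dseq n.+2 j =
  \sum_(1 <= k < 3 * j + 1) (if ~~ odd n.+2 then amat k j else bmat k j) * dseq n.+1 k.
Proof. by []. Qed.

Lemma dseq_even n j :
  dseq (2 * n).+2 j = \sum_(1 <= k < 3 * j + 1) amat k j * dseq (2 * n).+1 k.
Proof. by rewrite dseqSS !oddS mul2n odd_double. Qed.

Lemma dseq_odd n j :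
  dseq (2 * n).+3 j = \sum_(1 <= k < 3 * j + 1) bmat k j * dseq (2 * n).+2 k.
Proof. by rewrite dseqSS !oddS mul2n odd_double. Qed.

Lemma val3_ge_sum_amat (c : int) (d : nat -> int) j : (1 <= j)%N ->
  (forall k, (1 <= k)%N -> val3_ge (d k) (c + wt_odd k)) ->
  val3_ge (\sum_(1 <= k < 3 * j + 1) amat k j * d k) (c + wt_even j).
Proof.
move=> j_gt0 hd; apply: val3_ge_sum => k; rewrite mem_index_iota => /andP [k_gt0 _] _.
by apply: val3_geW (val3_geM (amat_val3_ge_wt k_gt0 j_gt0) (hd k k_gt0)); lia.
Qed.

Lemma val3_ge_sum_bmat (c : int) (d : nat -> int) j : (1 <= j)%N ->
  (forall k, (1 <= k)%N -> val3_ge (d k) (c + wt_even k)) ->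
  val3_ge (\sum_(1 <= k < 3 * j + 1) bmat k j * d k) (c + 6 + wt_odd j).
Proof.
move=> j_gt0 hd; apply: val3_ge_sum => k; rewrite mem_index_iota => /andP [k_gt0 _] _.
by apply: val3_geW (val3_geM (bmat_val3_ge_wt k_gt0 j_gt0) (hd k k_gt0)); lia.
Qed.

Lemma dseq_odd_val3_ge n k : (1 <= k)%N ->
  val3_ge (dseq (2 * n).+1 k) (6 * (n.+1 : int) + wt_odd k).
Proof.
elim: n k => [|n IH] k k_gt0.
  rewrite muln0; case: k k_gt0 => [|[|k]] // _; first by apply: val3_ge_ceil3; vm_compute.
  by rewrite /= nth_nil; exact: val3_ge0.
rewrite mulnS dseq_odd; apply: val3_geW (val3_ge_sum_bmat (c := 6 * (n.+1 : int)) k_gt0 _); first lia.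
by move=> i i_gt0; rewrite dseq_even; exact: val3_ge_sum_amat.
Qed.

Local Close Scope ring_scope.

Theorem theorem3p3 (alpha j : nat) :
  (1 <= alpha)%N -> (1 <= j)%N ->
  pi3_ge (dseq (2 * alpha - 1) j) (2 * alpha + (2 * j - 2) %/ 3).
Proof.
move=> alpha_gt0 j_gt0.
have -> : 2 * alpha - 1 = (2 * alpha.-1).+1 by lia.
apply: pi3_ge_val3_ge; apply: val3_geW (dseq_odd_val3_ge alpha.-1 j_gt0).
have := wt_odd_ge j; lia.
Qed.
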